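(* Let $K,M,N_c,N_g,Q$ be positive integers with $N_g\le N_c$, let $\rho_{tr}>0$, and for each $k\in\{0,\dots,K-1\}$ let $\boldsymbol{\Omega}_k\in\mathbb{R}^{M\times N_g}$ have non-negative entries, let $\phi_k\in\{0,\dots,QN_c-1\}$, and let $\varrho_k(\cdot)$ be a real-valued function on the integers. Define $\bar{\boldsymbol{\Omega}}_{k}=[\boldsymbol{\Omega}_k\ \ \mathbf{0}_{M\times(N_c-N_g)}]$ and, for integers $n$, $\boldsymbol{\Omega}_{k'}^{n}=\bar{\boldsymbol{\Omega}}_{k'}\boldsymbol{\Pi}_{N_c}^{n}\mathbf{I}_{N_c\times N_g}$. Write $d_{k',k}=\lfloor\phi_{k'}/Q\rfloor-\lfloor\phi_k/Q\rfloor$ and $$D_{k,i,j}=\sum_{k'=0}^{K-1}\delta\big(\langle\phi_{k'}\rangle_Q-\langle\phi_k\rangle_Q\big)\,[\boldsymbol{\Omega}_{k'}^{d_{k',k}}]_{i,j}+\frac{1}{\rho_{tr}Q}.$$ Define $$\epsilon^{CE}_{(Q)}=\sum_{k=0}^{K-1}\sum_{i=0}^{M-1}\sum_{j=0}^{N_g-1}\left\{[\boldsymbol{\Omega}_k]_{i,j}-\frac{[\boldsymbol{\Omega}_k]_{i,j}^2}{D_{k,i,j}}\right\},\qquad \epsilon^{CP}_{(Q)}(\Delta_\ell)=\sum_{k=0}^{K-1}\sum_{i=0}^{M-1}\sum_{j=0}^{N_g-1}\left\{[\boldsymbol{\Omega}_k]_{i,j}-\frac{\varrho_k^2(\Delta_\ell)[\boldsymbol{\Omega}_k]_{i,j}^2}{D_{k,i,j}}\right\}.$$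 Then $$\epsilon^{CE}_{(Q)}\ge\varepsilon^{CE}_{(Q)}=\sum_{k,i,j}\left\{[\boldsymbol{\Omega}_k]_{i,j}-\frac{[\boldsymbol{\Omega}_k]_{i,j}^2}{[\boldsymbol{\Omega}_k]_{i,j}+\frac{1}{\rho_{tr}Q}}\right\},$$ and for every integer $\Delta_\ell$, $$\epsilon^{CP}_{(Q)}(\Delta_\ell)\ge\varepsilon^{CP}_{(Q)}(\Delta_\ell)=\sum_{k,i,j}\left\{[\boldsymbol{\Omega}_k]_{i,j}-\frac{\varrho_k^2(\Delta_\ell)[\boldsymbol{\Omega}_k]_{i,j}^2}{[\boldsymbol{\Omega}_k]_{i,j}+\frac{1}{\rho_{tr}Q}}\right\}$$ (sums over $k\in\{0,\dots,K-1\}$, $i\in\{0,\dots,M-1\}$, $j\in\{0,\dots,N_g-1\}$). Both lower bounds are achieved if, for all $k\neq k'$ with $\langle\phi_k\rangle_Q=\langle\phi_{k'}\rangle_Q$, $$\left(\bar{\boldsymbol{\Omega}}_{k}\boldsymbol{\Pi}_{N_c}^{\lfloor\phi_k/Q\rfloor}\right)\odot\left(\bar{\boldsymbol{\Omega}}_{k'}\boldsymbol{\Pi}_{N_c}^{\lfloor\phi_{k'}/Q\rfloor}\right)=\mathbf{0}.$$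
   Context: Indices start at $0$. $\langle n\rangle_N$ denotes $n$ modulo $N$, $\lfloor\cdot\rfloor$ the floor. $\delta(0)=1$ and $\delta(n)=0$ for integers $n\ne0$. $\boldsymbol{\Pi}_N^{n}=\begin{bmatrix}\mathbf{0}&\mathbf{I}_{N-\langle n\rangle_N}\\ \mathbf{I}_{\langle n\rangle_N}&\mathbf{0}\end{bmatrix}$; $\mathbf{I}_{N\times G}$ is the first $G$ columns of $\mathbf{I}_N$; $\odot$ is the Hadamard product. Interpretation: adjustable phase shift pilots sent over $Q$ consecutive OFDM symbols; $\boldsymbol{\Omega}_k$ is user $k$'s angle-delay channel power matrix, $\phi_k$ its pilot phase shift, $\rho_{tr}$ the pilot SNR, $\varrho_k$ the temporal correlation function; $\epsilon^{CE}_{(Q)}$ and $\epsilon^{CP}_{(Q)}(\Delta_\ell)$ are the sum MSEs of MMSE channel estimation and prediction. *)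

From HB Require Import structures.
From mathcomp Require Import all_boot all_order all_algebra.
Set Implicit Arguments. Unset Strict Implicit. Unset Printing Implicit Defensive.
Import Order.TTheory GRing.Theory Num.Theory.
Local Open Scope ring_scope.

Section Defs.
Variable R : realFieldType.

Definition modN (n : int) (N : nat) : nat := `|(n %% (N : int))%Z|%N.

(* Pi_N^n = [[0, I_{N-<n>}], [I_{<n>}, 0]], written entrywise (block form) *)
Definition Pi (N : nat) (n : int) : 'M[R]_N :=
  \matrix_(r < N, c < N)
    (let m := modN n N in
     if (r < N - m)%N then ((c : nat) == r + m)%N%:R
     else ((c : nat) == r - (N - m))%N%:R).

Definition Icols (N G : nat) : 'M[R]_(N, G) :=
  \matrix_(i < N, j < G) ((i : nat) == j)%:R.

(* Omega_bar = [Omega  0_{M x (Nc - Ng)}] *)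
Definition Ombar (M Ng Nc : nat) (Om : 'M[R]_(M, Ng)) : 'M[R]_(M, Nc) :=
  \matrix_(i < M, j < Nc)
    (match @insub nat (fun x => (x < Ng)%N) 'I_Ng (val j) with
     | Some j' => Om i j'
     | None => 0 end).

Definition Omn (M Ng Nc : nat) (Om : 'M[R]_(M, Ng)) (n : int) : 'M[R]_(M, Ng) :=
  Ombar Nc Om *m Pi Nc n *m Icols Nc Ng.

Definition dshift (Q : nat) (phi : nat) (phi' : nat) : int :=
  (phi' %/ Q)%:Z - (phi %/ Q)%:Z.

Definition Dkij (K M Ng Nc Q : nat) (rho : R) (Om : 'I_K -> 'M[R]_(M, Ng))
  (phi : 'I_K -> nat) (k : 'I_K) (i : 'I_M) (j : 'I_Ng) : R :=
  \sum_(k' < K) ((phi k' %% Q)%N == (phi k %% Q)%N)%:R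
                 * (Omn Nc (Om k') (dshift Q (phi k) (phi k'))) i j
  + (rho * Q%:R)^-1.

Definition epsCE (K M Ng Nc Q : nat) (rho : R) (Om : 'I_K -> 'M[R]_(M, Ng))
  (phi : 'I_K -> nat) : R :=
  \sum_(k < K) \sum_(i < M) \sum_(j < Ng)
    (Om k i j - (Om k i j) ^+ 2 / Dkij Nc Q rho Om phi k i j).

Definition epsCP (K M Ng Nc Q : nat) (rho : R) (Om : 'I_K -> 'M[R]_(M, Ng))
  (phi : 'I_K -> nat) (vrho : 'I_K -> int -> R) (Dl : int) : R :=
  \sum_(k < K) \sum_(i < M) \sum_(j < Ng)
    (Om k i j - (vrho k Dl) ^+ 2 * (Om k i j) ^+ 2 / Dkij Nc Q rho Om phi k i j).

Definition lbCE (K M Ng : nat) (Q : nat) (rho : R) (Om : 'I_K -> 'M[R]_(M, Ng)) : R :=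
  \sum_(k < K) \sum_(i < M) \sum_(j < Ng)
    (Om k i j - (Om k i j) ^+ 2 / (Om k i j + (rho * Q%:R)^-1)).

Definition lbCP (K M Ng : nat) (Q : nat) (rho : R) (Om : 'I_K -> 'M[R]_(M, Ng))
  (vrho : 'I_K -> int -> R) (Dl : int) : R :=
  \sum_(k < K) \sum_(i < M) \sum_(j < Ng)
    (Om k i j - (vrho k Dl) ^+ 2 * (Om k i j) ^+ 2 / (Om k i j + (rho * Q%:R)^-1)).

Definition hadamard (m n : nat) (A B : 'M[R]_(m, n)) : 'M[R]_(m, n) :=
  map2_mx (fun a b => a * b) A B.

End Defs.

(* Split D_{k,i,j} as [Omega_k]_{i,j} + I_{k,i,j} + 1/(rho Q): the term k' = k has zero
   shift d_{k,k}, so it contributes [Omega_k]_{i,j} itself, and the interference I collects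
   non-negative entries of the cyclically shifted matrices of the other users with the same
   residue <phi_k>_Q.  Since x / (b + s) <= x / b, every summand of the MSE dominates the
   corresponding summand of the bound (the CE sum is the CP sum with varrho = 1).  Under the
   separability condition, the vanishing Hadamard product, read at column j + floor(phi_k/Q),
   is [Omega_k]_{i,j} times an interference entry; so I_{k,i,j} = 0 wherever
   [Omega_k]_{i,j} <> 0, and the summands coincide. *)

From HB Require Import structures.
From mathcomp Require Import all_boot all_order all_algebra zify.
Import Order.TTheory GRing.Theory Num.Theory.
Set Implicit Arguments. Unset Strict Implicit. Unset Printing Implicit Defensive.
Local Open Scope ring_scope.

Lemma modN_lt (x : int) (N : nat) : (0 < N)%N -> (modN x N < N)%N.
Proof. move=> N_gt0; rewrite /modN; have : (0 <= (x %% N%:Z)%Z < N%:Z)%R by lia. lia. Qed.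

Definition ord_mod (N : nat) (N_gt0 : (0 < N)%N) (x : int) : 'I_N :=
  Ordinal (modN_lt x N_gt0).

Section OrdMod.
Variables (N : nat) (N_gt0 : (0 < N)%N).

Lemma modN_val (x : int) : (modN x N)%:Z = (x %% N%:Z)%Z.
Proof. rewrite /modN; have : (0 <= (x %% N%:Z)%Z)%R by lia. lia. Qed.

Lemma ord_mod_val (x : int) : (ord_mod N_gt0 x)%:Z = (x %% N%:Z)%Z.
Proof. exact: modN_val. Qed.

Lemma ord_mod_eq (x y : int) : (x = y %[mod N%:Z])%Z -> ord_mod N_gt0 x = ord_mod N_gt0 y.
Proof. by move=> xy; apply: val_inj; rewrite /= /modN xy. Qed.

Lemma ord_mod_ord (c : 'I_N) : ord_mod N_gt0 c = c.
Proof. by apply: val_inj; rewrite /= /modN modz_nat modn_small. Qed.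

Lemma ord_modDl (x y : int) :
  ord_mod N_gt0 ((ord_mod N_gt0 x)%:Z + y) = ord_mod N_gt0 (x + y).
Proof. by apply: ord_mod_eq; rewrite ord_mod_val modzDml. Qed.

Lemma eq_ord_mod (r : 'I_N) (x : int) : (r == ord_mod N_gt0 x) = (r%:Z == (x %% N%:Z)%Z).
Proof. by rewrite -ord_mod_val -val_eqE. Qed.

End OrdMod.

Lemma modz_subn (c m N : nat) : (c < N)%N -> (m < N)%N ->
  ((c%:Z - m%:Z) %% N%:Z)%Z = if (m <= c)%N then c%:Z - m%:Z else c%:Z - m%:Z + N%:Z.
Proof.
move=> cN mN; case: leqP => mc; last rewrite -modzDr.
all: by rewrite modz_small //; lia.
Qed.

Section ShiftMatrices.
Variable R : realFieldType.

Lemma Pi_entry (N : nat) (N_gt0 : (0 < N)%N) (n : int) (r c : 'I_N) :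
  Pi R N n r c = (r == ord_mod N_gt0 (c%:Z - n))%:R.
Proof.
have m_lt := modN_lt n N_gt0; have r_lt := ltn_ord r; have c_lt := ltn_ord c.
rewrite /Pi mxE -(@ord_mod_eq _ _ (c%:Z - (modN n N)%:Z)); last first.
  by rewrite modN_val // -modzDmr modzNm modzDmr.
rewrite eq_ord_mod modz_subn //.
by case: ifP; case: (leqP (modN n N) c) => *; congr (nat_of_bool _)%:R; apply/eqP/eqP; lia.
Qed.

Lemma mulmx_Pi (m N : nat) (N_gt0 : (0 < N)%N) (n : int) (A : 'M[R]_(m, N)) i c :
  (A *m Pi R N n) i c = A i (ord_mod N_gt0 (c%:Z - n)).
Proof.
rewrite mxE (bigD1 (ord_mod N_gt0 (c%:Z - n))) //= Pi_entry eqxx mulr1 big1 ?addr0 //.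
by move=> r /negbTE r_neq; rewrite Pi_entry r_neq mulr0.
Qed.

Lemma mulmx_Icols (m N G : nat) (GN : (G <= N)%N) (B : 'M[R]_(m, N)) i (j : 'I_G) :
  (B *m Icols R N G) i j = B i (widen_ord GN j).
Proof.
rewrite mxE (bigD1 (widen_ord GN j)) //= mxE eqxx mulr1 big1 ?addr0 //.
move=> r r_neq; rewrite mxE; case: eqP => [r_j|]; last by rewrite mulr0.
by case/eqP: r_neq; apply: val_inj.
Qed.

Lemma Ombar_widen (M Ng Nc : nat) (NgNc : (Ng <= Nc)%N) (Om : 'M[R]_(M, Ng)) i j :
  Ombar Nc Om i (widen_ord NgNc j) = Om i j.
Proof. by rewrite mxE insubT //= => ?; congr (Om i _); apply: val_inj. Qed.

Lemma Ombar_ge0 (M Ng Nc : nat) (Om : 'M[R]_(M, Ng)) :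
  (forall i j, 0 <= Om i j) -> forall i c, 0 <= Ombar Nc Om i c.
Proof. by move=> Om_ge0 i c; rewrite mxE; case: insubP. Qed.

Lemma Omn_entry (M Ng Nc : nat) (NgNc : (Ng <= Nc)%N) (Nc_gt0 : (0 < Nc)%N)
  (Om : 'M[R]_(M, Ng)) (n : int) i (j : 'I_Ng) :
  Omn Nc Om n i j = Ombar Nc Om i (ord_mod Nc_gt0 (j%:Z - n)).
Proof. by rewrite /Omn (mulmx_Icols NgNc) (mulmx_Pi Nc_gt0). Qed.

Lemma Omn0 (M Ng Nc : nat) (NgNc : (Ng <= Nc)%N) (Om : 'M[R]_(M, Ng)) i j :
  Omn Nc Om 0 i j = Om i j.
Proof.
have Nc_gt0 : (0 < Nc)%N by have := ltn_ord j; lia.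
by rewrite (Omn_entry NgNc Nc_gt0) subr0 (ord_mod_ord _ (widen_ord NgNc j)) Ombar_widen.
Qed.

End ShiftMatrices.

Lemma ler_wpdivDr (R : realFieldType) (x b s : R) :
  0 <= x -> 0 < b -> 0 <= s -> x / (b + s) <= x / b.
Proof.
move=> x_ge0 b_gt0 s_ge0; apply: ler_wpM2l => //.
by rewrite lef_pV2 ?posrE ?lerDl // ltr_wpDr.
Qed.

Section PilotContamination.
Variables (R : realFieldType) (K M Nc Ng Q : nat) (rho : R).
Variables (Om : 'I_K -> 'M[R]_(M, Ng)) (phi : 'I_K -> nat).
Hypothesis NgNc : (Ng <= Nc)%N.
Hypothesis Om_ge0 : forall k i j, 0 <= Om k i j.

Definition interference (k : 'I_K) (i : 'I_M) (j : 'I_Ng) : R :=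
  \sum_(k' < K | k' != k) ((phi k' %% Q)%N == (phi k %% Q)%N)%:R
                           * Omn Nc (Om k') (dshift Q (phi k) (phi k')) i j.

Lemma Dkij_interference k i j :
  Dkij Nc Q rho Om phi k i j = Om k i j + interference k i j + (rho * Q%:R)^-1.
Proof. by rewrite /Dkij (bigD1 k) //= eqxx mul1r /dshift subrr Omn0. Qed.

Lemma interference_ge0 k i j : 0 <= interference k i j.
Proof.
have Nc_gt0 : (0 < Nc)%N by have := ltn_ord j; lia.
apply: sumr_ge0 => k' _; rewrite mulr_ge0 ?ler0n // (Omn_entry NgNc Nc_gt0).
exact: Ombar_ge0.
Qed.

Definition pilots_separable : Prop :=
  forall k k' : 'I_K, k != k' -> (phi k %% Q)%N = (phi k' %% Q)%N ->
    hadamard (Ombar Nc (Om k) *m Pi R Nc (phi k %/ Q)%N%:Z)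
             (Ombar Nc (Om k') *m Pi R Nc (phi k' %/ Q)%N%:Z) = 0.

Lemma interference_eq0 k i j :
  pilots_separable -> Om k i j != 0 -> interference k i j = 0.
Proof.
move=> separable Om_neq0; have Nc_gt0 : (0 < Nc)%N by have := ltn_ord j; lia.
apply: big1 => k' k'_neq; case: eqP => [same_mod|_]; last by rewrite mul0r.
set a := (phi k %/ Q)%N; set a' := (phi k' %/ Q)%N.
pose c := ord_mod Nc_gt0 (j%:Z + a%:Z).
have k_neq : k != k' by rewrite eq_sym.
have /matrixP/(_ i c) := separable k k' k_neq (esym same_mod).
rewrite [LHS]mxE [RHS]mxE (mulmx_Pi Nc_gt0) (mulmx_Pi Nc_gt0) !ord_modDl addrK.
rewrite (ord_mod_ord _ (widen_ord NgNc j)) Ombar_widen => /eqP.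
rewrite mulf_eq0 (negbTE Om_neq0) /= => /eqP shifted_eq0.
rewrite mul1r (Omn_entry NgNc Nc_gt0) /dshift -/a -/a' -shifted_eq0.
by rewrite opprB addrA.
Qed.

Lemma epsCP_eq_lbCP vrho Dl :
  pilots_separable -> epsCP Nc Q rho Om phi vrho Dl = lbCP Q rho Om vrho Dl.
Proof.
move=> separable; apply: eq_bigr => k _; apply: eq_bigr => i _; apply: eq_bigr => j _.
rewrite Dkij_interference; have [->|Om_neq0] := eqVneq (Om k i j) 0.
  by rewrite expr0n /= mulr0 !mul0r.
by rewrite interference_eq0 // addr0.
Qed.

Hypotheses (rho_gt0 : 0 < rho) (Q_gt0 : (0 < Q)%N).

Lemma lbCP_le_epsCP vrho Dl : lbCP Q rho Om vrho Dl <= epsCP Nc Q rho Om phi vrho Dl.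
Proof.
have c_gt0 : 0 < (rho * Q%:R)^-1 by rewrite invr_gt0 mulr_gt0 ?ltr0n.
apply: ler_sum => k _; apply: ler_sum => i _; apply: ler_sum => j _.
rewrite Dkij_interference addrAC lerD2l lerN2 ler_wpdivDr ?interference_ge0 //.
  by apply: mulr_ge0; apply: sqr_ge0.
exact: ltr_wpDl.
Qed.

End PilotContamination.

Lemma epsCE_epsCP (R : realFieldType) K M Nc Ng Q (rho : R) Om phi :
  @epsCE R K M Ng Nc Q rho Om phi = epsCP Nc Q rho Om phi (fun _ _ => 1) 0.
Proof.
by apply: eq_bigr => k _; apply: eq_bigr => i _; apply: eq_bigr => j _; rewrite expr1n mul1r.
Qed.

Lemma lbCE_lbCP (R : realFieldType) K M Ng Q (rho : R) Om :
  @lbCE R K M Ng Q rho Om = lbCP Q rho Om (fun _ _ => 1) 0.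
Proof.
by apply: eq_bigr => k _; apply: eq_bigr => i _; apply: eq_bigr => j _; rewrite expr1n mul1r.
Qed.

Theorem proposition5 (R : realFieldType) (K M Nc Ng Q : nat)
  (hK : (0 < K)%N) (hM : (0 < M)%N) (hNc : (0 < Nc)%N) (hNg : (0 < Ng)%N)
  (hQ : (0 < Q)%N) (hNgNc : (Ng <= Nc)%N)
  (rho : R) (hrho : 0 < rho)
  (Om : 'I_K -> 'M[R]_(M, Ng)) (hOm : forall k i j, 0 <= Om k i j)
  (phi : 'I_K -> nat) (hphi : forall k, (phi k < Q * Nc)%N)
  (vrho : 'I_K -> int -> R) :
  [/\ lbCE Q rho Om <= epsCE Nc Q rho Om phi,
      (forall Dl : int, lbCP Q rho Om vrho Dl <= epsCP Nc Q rho Om phi vrho Dl) &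
      ((forall k k' : 'I_K, k != k' -> (phi k %% Q)%N = (phi k' %% Q)%N ->
          hadamard (Ombar Nc (Om k) *m Pi R Nc (phi k %/ Q)%N%:Z)
                   (Ombar Nc (Om k') *m Pi R Nc (phi k' %/ Q)%N%:Z) = 0) ->
       epsCE Nc Q rho Om phi = lbCE Q rho Om /\
       forall Dl : int, epsCP Nc Q rho Om phi vrho Dl = lbCP Q rho Om vrho Dl)].
Proof.
split.
- by rewrite epsCE_epsCP lbCE_lbCP; apply: lbCP_le_epsCP.
- by move=> Dl; apply: lbCP_le_epsCP.
- move=> separable; split; last by move=> Dl; apply: epsCP_eq_lbCP.
  by rewrite epsCE_epsCP lbCE_lbCP; apply: epsCP_eq_lbCP.
Qed.
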